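(* Let $K\neq0$. For all $A,P,B,Q\in\mathbb S^3_K$ with $A\neq P$ and $B\neq Q$, $|\operatorname{cosq}_K(\overrightarrow{AP},\overrightarrow{BQ})|\le1$.
   Context: $\mathbb S^3_K$ is the open hemisphere of radius $1/\sqrt K$ of the round 3-sphere if $K>0$, and 3-dimensional hyperbolic space of curvature $K$ if $K<0$, with intrinsic metric $\rho$. Let $\kappa=\sqrt{|K|}$. For $A\neq P$, $B\neq Q$ put $x=\rho(A,P)$, $y=\rho(B,Q)$, $a=\rho(A,B)$, $b=\rho(P,Q)$, $d=\rho(P,B)$, $f=\rho(A,Q)$; for $K>0$ $$\operatorname{cosq}_K(\overrightarrow{AP},\overrightarrow{BQ})=\frac{\cos\kappa b+\cos\kappa x\cos\kappa y}{\sin\kappa x\sin\kappa y}-\frac{(\cos\kappa x+\cos\kappa d)(\cos\kappa y+\cos\kappa f)}{(1+\cos\kappa a)\sin\kappa x\sin\kappa y},$$ and for $K<0$ $$\operatorname{cosq}_K(\overrightarrow{AP},\overrightarrow{BQ})=\frac{(\cosh\kappa x+\cosh\kappa d)(\cosh\kappa y+\cosh\kappa f)}{(1+\cosh\kappa a)\sinh\kappa x\sinh\kappa y}-\frac{\cosh\kappa b+\cosh\kappa x\cosh\kappa y}{\sinh\kappa x\sinh\kappa y}.$$ *)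

From Stdlib Require Import Reals.
Open Scope R_scope.

Record pt4 : Type := mkpt4 { c0 : R; c1 : R; c2 : R; c3 : R }.

Definition edot (x y : pt4) : R :=
  c0 x * c0 y + c1 x * c1 y + c2 x * c2 y + c3 x * c3 y.

Definition ldot (x y : pt4) : R :=
  - (c0 x * c0 y) + c1 x * c1 y + c2 x * c2 y + c3 x * c3 y.

Definition kappa (K : R) : R := sqrt (Rabs K).

(* Model of S^3_K:
   K > 0 : open hemisphere { x | |x|^2 = 1/K, c3 x > 0 } of the round 3-sphere
           of radius 1/sqrt K in R^4;
   K < 0 : hyperboloid model { x | <x,x>_L = 1/K, c0 x > 0 } of hyperbolic
           3-space of curvature K. *)
Definition in_S3 (K : R) (x : pt4) : Prop :=
  (0 < K /\ edot x x = / K /\ 0 < c3 x) \/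
  (K < 0 /\ ldot x x = / K /\ 0 < c0 x).

Definition arcosh (t : R) : R := ln (t + sqrt (t * t - 1)).

Definition rho (K : R) (x y : pt4) : R :=
  if Rlt_dec 0 K then acos (K * edot x y) / kappa K
  else arcosh (K * ldot x y) / kappa K.

Definition cosq (K : R) (A P B Q : pt4) : R :=
  let k := kappa K in
  let x := rho K A P in
  let y := rho K B Q in
  let a := rho K A B in
  let b := rho K P Q in
  let d := rho K P B in
  let f := rho K A Q in
  if Rlt_dec 0 K then
    (cos (k*b) + cos (k*x) * cos (k*y)) / (sin (k*x) * sin (k*y))
    - (cos (k*x) + cos (k*d)) * (cos (k*y) + cos (k*f))
        / ((1 + cos (k*a)) * sin (k*x) * sin (k*y))
  else
    (cosh (k*x) + cosh (k*d)) * (cosh (k*y) + cosh (k*f))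
        / ((1 + cosh (k*a)) * sinh (k*x) * sinh (k*y))
    - (cosh (k*b) + cosh (k*x) * cosh (k*y)) / (sinh (k*x) * sinh (k*y)).

(* Scaling the points by sqrt|K| puts them on the unit sphere (K > 0) or on the
   unit hyperboloid (K < 0).  With e = sgn K and the form
   b_e(x, y) = e x0 y0 + x1 y1 + x2 y2 + x3 y3 both models read b_e(x, x) = e, and
   the cosine (resp. hyperbolic cosine) of kappa times a distance is e b_e(x, y).
   The tangent vector p - e b_e(a, p) a of AP at a is carried to b by
   T u = u - b_e(u, b) / (e + b_e(a, b)) (a + b), which maps the orthogonal of a
   isometrically into the orthogonal of b; cosq is the cosine of the angle, at b,
   between T(p - e b_e(a, p) a) and q - e b_e(b, q) b.  Since b_e is positive
   semidefinite on the orthogonal of b, Cauchy-Schwarz gives |cosq| <= 1. *)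
From Stdlib Require Import Reals Lra Psatz.
Open Scope R_scope.

Definition bil (e : R) (x y : pt4) : R :=
  e * (c0 x * c0 y) + c1 x * c1 y + c2 x * c2 y + c3 x * c3 y.

Definition comb (s : R) (x : pt4) (t : R) (y : pt4) : pt4 :=
  mkpt4 (s * c0 x + t * c0 y) (s * c1 x + t * c1 y)
        (s * c2 x + t * c2 y) (s * c3 x + t * c3 y).

Definition sc (s : R) (x : pt4) : pt4 :=
  mkpt4 (s * c0 x) (s * c1 x) (s * c2 x) (s * c3 x).

Lemma edot_bil x y : edot x y = bil 1 x y.
Proof. unfold edot, bil; ring. Qed.

Lemma ldot_bil x y : ldot x y = bil (-1) x y.
Proof. unfold ldot, bil; ring. Qed.

Lemma quadratic_nonneg_discr A B C :
  0 <= C -> (forall t, 0 <= A + 2 * t * B + t * t * C) -> B * B <= A * C.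
Proof.
  intros hC hQ. destruct (Rle_lt_or_eq_dec _ _ hC) as [hCpos | hC0].
  - specialize (hQ (- B / C)).
    replace (A + 2 * (- B / C) * B + - B / C * (- B / C) * C) with ((A * C - B * B) / C)
      in hQ by (field; lra).
    apply Rmult_le_compat_r with (r := C) in hQ; [|lra].
    unfold Rdiv in hQ; rewrite Rmult_assoc, Rinv_l in hQ; lra.
  - subst C. destruct (Req_dec B 0) as [-> | hB]; [lra|].
    specialize (hQ (- (A + 1) / (2 * B))).
    replace (A + 2 * (- (A + 1) / (2 * B)) * B + - (A + 1) / (2 * B) * (- (A + 1) / (2 * B)) * 0)
      with (-1) in hQ by (field; lra).
    lra.
Qed.

Section Bilinear.

Variable e : R.

Lemma bil_sym x y : bil e x y = bil e y x.
Proof. unfold bil; ring. Qed.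

Lemma bil_combl s x t y z : bil e (comb s x t y) z = s * bil e x z + t * bil e y z.
Proof. unfold bil, comb; simpl; ring. Qed.

Lemma bil_combr s x t y z : bil e z (comb s x t y) = s * bil e z x + t * bil e z y.
Proof. unfold bil, comb; simpl; ring. Qed.

Lemma bil_sc s x y : bil e (sc s x) (sc s y) = s * s * bil e x y.
Proof. unfold bil, sc; simpl; ring. Qed.

Definition psd_orth (b : pt4) : Prop := forall v, bil e v b = 0 -> 0 <= bil e v v.

Lemma bil_cauchy_schwarz_orth b u w : psd_orth b -> bil e u b = 0 -> bil e w b = 0 ->
  bil e u w * bil e u w <= bil e u u * bil e w w.
Proof.
  intros hpsd hu hw. apply quadratic_nonneg_discr; [exact (hpsd w hw)|].
  intro t. assert (hv : bil e (comb 1 u t w) b = 0) by (rewrite bil_combl, hu, hw; ring).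
  specialize (hpsd _ hv).
  rewrite bil_combl, !bil_combr, (bil_sym w u) in hpsd. lra.
Qed.

Definition tangent (a p : pt4) : pt4 := comb 1 p (- (bil e p a / bil e a a)) a.

Definition transport (a b u : pt4) : pt4 :=
  comb 1 u (- (bil e u b / (bil e a a + bil e a b))) (comb 1 a 1 b).

Lemma bil_tangent_l a p : bil e a a <> 0 -> bil e (tangent a p) a = 0.
Proof. intro ha. unfold tangent. rewrite bil_combl. field. exact ha. Qed.

Lemma bil_tangent_tangent a p : bil e a a <> 0 ->
  bil e (tangent a p) (tangent a p) = bil e p p - bil e p a * bil e p a / bil e a a.
Proof.
  intro ha. unfold tangent. rewrite bil_combl, !bil_combr, (bil_sym a p). field. exact ha.
Qed.

Lemma bil_transport_l a b u : bil e a a = bil e b b -> bil e a a + bil e a b <> 0 ->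
  bil e (transport a b u) b = 0.
Proof.
  intros hab hne. unfold transport. rewrite !bil_combl, <- hab. field. exact hne.
Qed.

Lemma bil_transport_transport a b u : bil e a a = bil e b b -> bil e a a + bil e a b <> 0 ->
  bil e u a = 0 -> bil e (transport a b u) (transport a b u) = bil e u u.
Proof.
  intros hab hne hua. unfold transport.
  rewrite !bil_combl, !bil_combr, (bil_sym a u), (bil_sym b u), (bil_sym b a), hua, <- hab.
  field. exact hne.
Qed.

End Bilinear.

Lemma bil_tangent_unit e a p : e = 1 \/ e = -1 -> bil e a a = e -> bil e p p = e ->
  bil e (tangent e a p) (tangent e a p) = e * (1 - e * bil e a p * (e * bil e a p)).
Proof.
  intros he ha hp. rewrite bil_tangent_tangent by lra.
  rewrite hp, ha, (bil_sym e p a). destruct he; subst; field.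
Qed.

Lemma bil_transport_tangent e a p b q :
  e = 1 \/ e = -1 -> bil e a a = e -> bil e b b = e -> e + bil e a b <> 0 ->
  let c x y := e * bil e x y in
  bil e (transport e a b (tangent e a p)) (tangent e b q) * (1 + c a b)
    = e * ((c p q + c a p * c b q) * (1 + c a b) - (c a p + c p b) * (c b q + c a q)).
Proof.
  intros he ha hb hne c. unfold transport, tangent, c.
  rewrite !bil_combl, !bil_combr, ha, hb, (bil_sym e q b), (bil_sym e p a).
  destruct he; subst; field; lra.
Qed.

Lemma transport_tangent_cauchy_schwarz e a p b q :
  e = 1 \/ e = -1 ->
  bil e a a = e -> bil e p p = e -> bil e b b = e -> bil e q q = e ->
  psd_orth e b -> 1 + e * bil e a b <> 0 ->
  let c x y := e * bil e x y in
  ((c p q + c a p * c b q) * (1 + c a b) - (c a p + c p b) * (c b q + c a q)) ^ 2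
    <= (1 + c a b) ^ 2 * ((1 - c a p * c a p) * (1 - c b q * c b q)).
Proof.
  intros he ha hp hb hq hpsd hne c.
  assert (hee : e * e = 1) by (destruct he; subst; ring).
  assert (hne' : e + bil e a b <> 0).
  { intro h; apply hne. replace (1 + e * bil e a b) with (e * (e + bil e a b)) by lra.
    rewrite h; ring. }
  set (U := transport e a b (tangent e a p)).
  set (W := tangent e b q).
  assert (hUb : bil e U b = 0) by (apply bil_transport_l; congruence).
  assert (hWb : bil e W b = 0) by (apply bil_tangent_l; lra).
  assert (hnorms : bil e U U * bil e W W = (1 - c a p * c a p) * (1 - c b q * c b q)).
  { assert (hua : bil e (tangent e a p) a = 0) by (apply bil_tangent_l; lra).
    unfold U, W; rewrite bil_transport_transport, !bil_tangent_unit by (congruence || lra).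
    unfold c. transitivity (e * e * ((1 - e * bil e a p * (e * bil e a p))
      * (1 - e * bil e b q * (e * bil e b q)))); [ring|].
    rewrite hee; ring. }
  match goal with |- ?N ^ 2 <= _ => replace N with (e * (bil e U W * (1 + c a b))) end.
  2: { unfold U, W, c; cbv beta. rewrite (bil_transport_tangent e a p b q he ha hb hne').
       rewrite <- Rmult_assoc, hee; ring. }
  rewrite <- hnorms.
  replace ((e * (bil e U W * (1 + c a b))) ^ 2)
    with ((1 + c a b) ^ 2 * (bil e U W * bil e U W))
    by (transitivity (e * e * ((1 + c a b) ^ 2 * (bil e U W * bil e U W))); [rewrite hee|]; ring).
  apply Rmult_le_compat_l; [apply pow2_ge_0|].
  exact (bil_cauchy_schwarz_orth e b U W hpsd hUb hWb).
Qed.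

Lemma psd_orth_euclid b : psd_orth 1 b.
Proof. unfold psd_orth, bil; intros v _. nra. Qed.

Lemma psd_orth_timelike b : bil (-1) b b < 0 -> psd_orth (-1) b.
Proof.
  intros hb; unfold psd_orth; intros v hvb. destruct b as [b0 b1 b2 b3], v as [v0 v1 v2 v3].
  unfold bil in *; simpl in *.
  set (Sb := b1 * b1 + b2 * b2 + b3 * b3).
  set (Sv := v1 * v1 + v2 * v2 + v3 * v3).
  assert (hSv : 0 <= Sv) by (unfold Sv; nra).
  assert (hSb : Sb < b0 * b0) by (unfold Sb; lra).
  assert (hCS : (v1 * b1 + v2 * b2 + v3 * b3) ^ 2 <= Sv * Sb).
  { assert (hlagrange : Sv * Sb - (v1 * b1 + v2 * b2 + v3 * b3) ^ 2
      = (v1 * b2 - v2 * b1) ^ 2 + (v1 * b3 - v3 * b1) ^ 2 + (v2 * b3 - v3 * b2) ^ 2)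
      by (unfold Sv, Sb; ring).
    assert (0 <= (v1 * b2 - v2 * b1) ^ 2 + (v1 * b3 - v3 * b1) ^ 2 + (v2 * b3 - v3 * b2) ^ 2)
      by (repeat apply Rplus_le_le_0_compat; apply pow2_ge_0).
    lra. }
  assert (hv0 : v0 * v0 * (b0 * b0) <= Sv * (b0 * b0)).
  { replace (v0 * v0 * (b0 * b0)) with ((v1 * b1 + v2 * b2 + v3 * b3) ^ 2)
      by (replace (v1 * b1 + v2 * b2 + v3 * b3) with (v0 * b0) by lra; ring).
    assert (Sv * Sb <= Sv * (b0 * b0)) by (apply Rmult_le_compat_l; lra).
    lra. }
  assert (v0 * v0 <= Sv) by (apply (Rmult_le_reg_r (b0 * b0)); nra).
  unfold Sv in *; lra.
Qed.

Lemma hemisphere_dot_gt_m1 a p : edot a a = 1 -> edot p p = 1 -> 0 < c3 a -> 0 < c3 p ->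
  -1 < edot a p.
Proof.
  destruct a as [a0 a1 a2 a3], p as [p0 p1 p2 p3]; unfold edot; simpl; intros ha hp ha3 hp3.
  assert (hsum : 2 + 2 * (a0 * p0 + a1 * p1 + a2 * p2 + a3 * p3)
    = (a0 + p0) ^ 2 + (a1 + p1) ^ 2 + (a2 + p2) ^ 2 + (a3 + p3) ^ 2) by nra.
  assert (0 < (a3 + p3) ^ 2) by (apply pow_lt; lra).
  assert (0 <= (a0 + p0) ^ 2 + (a1 + p1) ^ 2 + (a2 + p2) ^ 2)
    by (repeat apply Rplus_le_le_0_compat; apply pow2_ge_0).
  lra.
Qed.

Lemma sphere_dot_le1 a p : edot a a = 1 -> edot p p = 1 ->
  edot a p <= 1 /\ (edot a p = 1 -> a = p).
Proof.
  destruct a as [a0 a1 a2 a3], p as [p0 p1 p2 p3]; unfold edot; simpl; intros ha hp.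
  assert (hdist : 2 - 2 * (a0 * p0 + a1 * p1 + a2 * p2 + a3 * p3)
    = (a0 - p0) ^ 2 + (a1 - p1) ^ 2 + (a2 - p2) ^ 2 + (a3 - p3) ^ 2) by nra.
  pose proof (pow2_ge_0 (a0 - p0)); pose proof (pow2_ge_0 (a1 - p1));
  pose proof (pow2_ge_0 (a2 - p2)); pose proof (pow2_ge_0 (a3 - p3)).
  split; [lra|]. intro h. f_equal; nra.
Qed.

Lemma hemisphere_dot_bounds a p : edot a a = 1 -> edot p p = 1 -> 0 < c3 a -> 0 < c3 p ->
  -1 < edot a p <= 1.
Proof.
  intros ha hp ha3 hp3.
  split; [exact (hemisphere_dot_gt_m1 a p ha hp ha3 hp3)
        | exact (proj1 (sphere_dot_le1 a p ha hp))].
Qed.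

Lemma sphere_dot_lt1 a p : edot a a = 1 -> edot p p = 1 -> a <> p -> edot a p < 1.
Proof.
  intros ha hp hap. destruct (sphere_dot_le1 a p ha hp) as [hle heq].
  destruct (Rle_lt_or_eq_dec _ _ hle) as [hlt | he]; [exact hlt | contradiction (heq he)].
Qed.

Lemma hyperboloid_dot_ge1 a p : ldot a a = -1 -> ldot p p = -1 -> 0 < c0 a -> 0 < c0 p ->
  1 <= - ldot a p /\ (- ldot a p = 1 -> a = p).
Proof.
  destruct a as [a0 a1 a2 a3], p as [p0 p1 p2 p3]; unfold ldot; simpl; intros ha hp ha0 hp0.
  set (X := a1 * p1 + a2 * p2 + a3 * p3).
  set (D := (a1 - p1) ^ 2 + (a2 - p2) ^ 2 + (a3 - p3) ^ 2).
  set (L := (a1 * p2 - a2 * p1) ^ 2 + (a1 * p3 - a3 * p1) ^ 2 + (a2 * p3 - a3 * p2) ^ 2).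
  assert (hgap : (a0 * p0) ^ 2 - (1 + X) ^ 2 = D + L) by (unfold X, D, L; nra).
  assert (hD : 0 <= D) by (unfold D; repeat apply Rplus_le_le_0_compat; apply pow2_ge_0).
  assert (hL : 0 <= L) by (unfold L; repeat apply Rplus_le_le_0_compat; apply pow2_ge_0).
  assert (hpos : 0 < a0 * p0) by nra.
  assert (hge : 1 + X <= a0 * p0).
  { destruct (Rle_or_lt (1 + X) (a0 * p0)) as [l | l]; [exact l | nra]. }
  split; [unfold X in *; lra|]. intro h.
  assert (hD0 : D = 0).
  { assert (hX : a0 * p0 = 1 + X) by (unfold X in *; lra). rewrite hX in hgap. lra. }
  assert (hsame : a1 = p1 /\ a2 = p2 /\ a3 = p3).
  { unfold D in hD0. pose proof (pow2_ge_0 (a1 - p1)); pose proof (pow2_ge_0 (a2 - p2));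
    pose proof (pow2_ge_0 (a3 - p3)). repeat split; nra. }
  destruct hsame as [-> [-> ->]]. assert (a0 = p0) by nra. subst; reflexivity.
Qed.

Lemma hyperboloid_dot_gt1 a p : ldot a a = -1 -> ldot p p = -1 -> 0 < c0 a -> 0 < c0 p ->
  a <> p -> 1 < - ldot a p.
Proof.
  intros ha hp ha0 hp0 hap. destruct (hyperboloid_dot_ge1 a p ha hp ha0 hp0) as [hle heq].
  destruct (Rle_lt_or_eq_dec _ _ hle) as [hlt | he]; [exact hlt | contradiction (heq (eq_sym he))].
Qed.

Lemma sc_inj s x y : s <> 0 -> sc s x = sc s y -> x = y.
Proof.
  intros hs h. destruct x as [x0 x1 x2 x3], y as [y0 y1 y2 y3].
  unfold sc in h; simpl in h. injection h; intros.
  f_equal; apply (Rmult_eq_reg_l s); assumption.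
Qed.

Lemma in_S3_pos_unit K X : 0 < K -> in_S3 K X ->
  edot (sc (sqrt K) X) (sc (sqrt K) X) = 1 /\ 0 < c3 (sc (sqrt K) X).
Proof.
  intros hK [[_ [hX hX3]] | [hK' _]]; [|lra].
  rewrite edot_bil, bil_sc, <- edot_bil, sqrt_sqrt, hX by lra. split; [field; lra|].
  simpl. apply Rmult_lt_0_compat; [apply sqrt_lt_R0|]; lra.
Qed.

Lemma in_S3_neg_unit K X : K < 0 -> in_S3 K X ->
  ldot (sc (sqrt (- K)) X) (sc (sqrt (- K)) X) = -1 /\ 0 < c0 (sc (sqrt (- K)) X).
Proof.
  intros hK [[hK' _] | [_ [hX hX0]]]; [lra|].
  rewrite ldot_bil, bil_sc, <- ldot_bil, sqrt_sqrt, hX by lra. split; [field; lra|].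
  simpl. apply Rmult_lt_0_compat; [apply sqrt_lt_R0|]; lra.
Qed.

Lemma kappa_rho_pos K X Y : 0 < K ->
  kappa K * rho K X Y = acos (edot (sc (sqrt K) X) (sc (sqrt K) Y)).
Proof.
  intro hK. rewrite edot_bil, bil_sc, <- edot_bil, sqrt_sqrt by lra. unfold rho, kappa.
  destruct (Rlt_dec 0 K); [|lra]. rewrite Rabs_pos_eq by lra.
  assert (0 < sqrt K) by (apply sqrt_lt_R0; lra). field. lra.
Qed.

Lemma kappa_rho_neg K X Y : K < 0 ->
  kappa K * rho K X Y = arcosh (- ldot (sc (sqrt (- K)) X) (sc (sqrt (- K)) Y)).
Proof.
  intro hK. rewrite ldot_bil, bil_sc, <- ldot_bil, sqrt_sqrt by lra. unfold rho, kappa.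
  destruct (Rlt_dec 0 K); [lra|]. rewrite Rabs_left by lra.
  assert (0 < sqrt (- K)) by (apply sqrt_lt_R0; lra).
  replace (- (- K * ldot X Y)) with (K * ldot X Y) by ring. field. lra.
Qed.

Lemma cosh_arcosh t : 1 <= t -> cosh (arcosh t) = t.
Proof.
  intro ht. unfold cosh, arcosh.
  assert (hs : 0 <= sqrt (t * t - 1)) by apply sqrt_pos.
  assert (hss : sqrt (t * t - 1) * sqrt (t * t - 1) = t * t - 1) by (apply sqrt_sqrt; nra).
  rewrite exp_Ropp, exp_ln by lra. field_simplify_eq; [nra | lra].
Qed.

Lemma sinh_arcosh t : 1 <= t -> sinh (arcosh t) = sqrt (t * t - 1).
Proof.
  intro ht. unfold sinh, arcosh.
  assert (hs : 0 <= sqrt (t * t - 1)) by apply sqrt_pos.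
  assert (hss : sqrt (t * t - 1) * sqrt (t * t - 1) = t * t - 1) by (apply sqrt_sqrt; nra).
  rewrite exp_Ropp, exp_ln by lra. field_simplify_eq; [nra | lra].
Qed.

Lemma Rabs_cosq_formula_le1 cx cy ca cb cd cf sx sy :
  0 < sx -> 0 < sy -> 0 < 1 + ca ->
  sx * sx * (sy * sy) = (1 - cx * cx) * (1 - cy * cy) ->
  ((cb + cx * cy) * (1 + ca) - (cx + cd) * (cy + cf)) ^ 2
    <= (1 + ca) ^ 2 * ((1 - cx * cx) * (1 - cy * cy)) ->
  Rabs ((cb + cx * cy) / (sx * sy) - (cx + cd) * (cy + cf) / ((1 + ca) * sx * sy)) <= 1.
Proof.
  intros hx hy ha hs hN. rewrite <- hs in hN.
  set (z := (cb + cx * cy) / (sx * sy) - (cx + cd) * (cy + cf) / ((1 + ca) * sx * sy)).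
  set (D := (1 + ca) * sx * sy).
  assert (hD : 0 < D) by (unfold D; repeat apply Rmult_lt_0_compat; lra).
  assert (hz : z * D = (cb + cx * cy) * (1 + ca) - (cx + cd) * (cy + cf))
    by (unfold z, D; field; lra).
  rewrite <- hz in hN.
  assert (hz2 : z * z <= 1).
  { replace ((1 + ca) ^ 2 * (sx * sx * (sy * sy))) with (D * D) in hN by (unfold D; ring).
    replace ((z * D) ^ 2) with (z * z * (D * D)) in hN by ring.
    apply (Rmult_le_reg_r (D * D)); nra. }
  rewrite <- Rabs_R1. apply Rsqr_le_abs_0. unfold Rsqr; lra.
Qed.

Lemma cosq_pos_le1 K A P B Q : 0 < K ->
  in_S3 K A -> in_S3 K P -> in_S3 K B -> in_S3 K Q -> A <> P -> B <> Q ->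
  Rabs (cosq K A P B Q) <= 1.
Proof.
  intros hK hA hP hB hQ hAP hBQ.
  assert (hs : sqrt K <> 0) by (apply Rgt_not_eq, sqrt_lt_R0; lra).
  destruct (in_S3_pos_unit K A hK hA) as [ha ha3], (in_S3_pos_unit K P hK hP) as [hp hp3],
    (in_S3_pos_unit K B hK hB) as [hb hb3], (in_S3_pos_unit K Q hK hQ) as [hq hq3].
  set (a := sc (sqrt K) A) in *; set (p := sc (sqrt K) P) in *;
  set (b := sc (sqrt K) B) in *; set (q := sc (sqrt K) Q) in *.
  assert (hx : edot a p < 1)
    by (apply sphere_dot_lt1; auto; intro heq; exact (hAP (sc_inj _ _ _ hs heq))).
  assert (hy : edot b q < 1)
    by (apply sphere_dot_lt1; auto; intro heq; exact (hBQ (sc_inj _ _ _ hs heq))).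
  pose proof (hemisphere_dot_bounds a p ha hp ha3 hp3).
  pose proof (hemisphere_dot_bounds b q hb hq hb3 hq3).
  pose proof (hemisphere_dot_bounds a b ha hb ha3 hb3).
  unfold cosq; cbv zeta. rewrite !kappa_rho_pos by exact hK. fold a p b q.
  destruct (Rlt_dec 0 K) as [_ | ]; [|lra].
  rewrite !cos_acos, !sin_acos by (match goal with |- _ <= edot ?x ?y <= _ =>
    assert (-1 < edot x y <= 1) by (apply hemisphere_dot_bounds; assumption) end; lra).
  unfold Rsqr. apply Rabs_cosq_formula_le1; try (apply sqrt_lt_R0; nra); try lra.
  - rewrite !sqrt_sqrt by nra. reflexivity.
  - assert (hdot : forall x y, edot x y = 1 * bil 1 x y) by (intros; rewrite edot_bil; ring).
    rewrite !hdot in *.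
    apply (transport_tangent_cauchy_schwarz 1 a p b q); try lra.
    apply psd_orth_euclid.
Qed.

Lemma cosq_neg_le1 K A P B Q : K < 0 ->
  in_S3 K A -> in_S3 K P -> in_S3 K B -> in_S3 K Q -> A <> P -> B <> Q ->
  Rabs (cosq K A P B Q) <= 1.
Proof.
  intros hK hA hP hB hQ hAP hBQ.
  assert (hs : sqrt (- K) <> 0) by (apply Rgt_not_eq, sqrt_lt_R0; lra).
  destruct (in_S3_neg_unit K A hK hA) as [ha ha0], (in_S3_neg_unit K P hK hP) as [hp hp0],
    (in_S3_neg_unit K B hK hB) as [hb hb0], (in_S3_neg_unit K Q hK hQ) as [hq hq0].
  set (a := sc (sqrt (- K)) A) in *; set (p := sc (sqrt (- K)) P) in *;
  set (b := sc (sqrt (- K)) B) in *; set (q := sc (sqrt (- K)) Q) in *.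
  assert (hx : 1 < - ldot a p)
    by (apply hyperboloid_dot_gt1; auto; intro heq; exact (hAP (sc_inj _ _ _ hs heq))).
  assert (hy : 1 < - ldot b q)
    by (apply hyperboloid_dot_gt1; auto; intro heq; exact (hBQ (sc_inj _ _ _ hs heq))).
  pose proof (hyperboloid_dot_ge1 a b ha hb ha0 hb0) as [hab _].
  unfold cosq; cbv zeta. rewrite !kappa_rho_neg by exact hK. fold a p b q.
  destruct (Rlt_dec 0 K) as [ | _]; [lra|].
  rewrite !cosh_arcosh, !sinh_arcosh by (match goal with |- 1 <= - ldot ?x ?y =>
    apply (hyperboloid_dot_ge1 x y); assumption end).
  rewrite Rabs_minus_sym. apply Rabs_cosq_formula_le1; try (apply sqrt_lt_R0; nra); try lra.
  - rewrite !sqrt_sqrt by nra. ring.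
  - assert (hdot : forall x y, - ldot x y = -1 * bil (-1) x y)
      by (intros; rewrite ldot_bil; ring).
    rewrite !hdot in *.
    apply (transport_tangent_cauchy_schwarz (-1) a p b q); try lra.
    + rewrite <- ldot_bil; assumption.
    + rewrite <- ldot_bil; assumption.
    + rewrite <- ldot_bil; assumption.
    + rewrite <- ldot_bil; assumption.
    + apply psd_orth_timelike. rewrite <- ldot_bil. lra.
Qed.

Theorem corollary3p3 (K : R) (hK : K <> 0) (A P B Q : pt4)
  (hA : in_S3 K A) (hP : in_S3 K P) (hB : in_S3 K B) (hQ : in_S3 K Q)
  (hAP : A <> P) (hBQ : B <> Q) :
  Rabs (cosq K A P B Q) <= 1.
Proof.
  destruct (Rlt_or_le 0 K) as [hpos | hle].
  - exact (cosq_pos_le1 K A P B Q hpos hA hP hB hQ hAP hBQ).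
  - exact (cosq_neg_le1 K A P B Q ltac:(lra) hA hP hB hQ hAP hBQ).
Qed.
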